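(* Let $n\ge 1$, let $b\in B_n\cong\mathrm{MCG}(D^2\setminus\{p_1,\dots,p_n\},\partial D^2)$, and let $\tau\in\mathrm{MCG}(D^2\setminus\{p_1,\dots,p_n\})$ be an orientation-reversing involution (i.e. $\tau$ reverses orientation and $\tau^2=\mathrm{Id}$). Set $b^*=\tau b\tau$. Then the closure of the braid $bb^*$ is a knot (i.e. has exactly one component) if and only if $n$ is odd and $\pi(b\tau)$ is an $n$-cycle, where $\pi$ denotes the canonical map to the symmetric group $S_n$ recording the induced permutation of the punctures $p_1,\dots,p_n$.
   Context: Braids are viewed as mapping classes of the $n$-punctured disc relative to the boundary; the mapping class group $\mathrm{MCG}(D^2\setminus\{p_1,\dots,p_n\})$ (not relative to the boundary) acts on $B_n$ by conjugation, which is how $b^*=\tau b\tau$ is regarded as a braid. *)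

From HB Require Import structures.
From mathcomp Require Import all_boot all_order all_algebra all_fingroup.
From mathcomp Require Import all_classical all_reals all_analysis.
Set Implicit Arguments. Unset Strict Implicit. Unset Printing Implicit Defensive.
Import Order.TTheory GRing.Theory Num.Theory.
Import numFieldNormedType.Exports.
Local Open Scope ring_scope.
Local Open Scope classical_set_scope.

Definition in_open_disc {R : realType} (z : R * R) : Prop := z.1 ^+ 2 + z.2 ^+ 2 < 1.
Definition in_closed_disc {R : realType} (z : R * R) : Prop := z.1 ^+ 2 + z.2 ^+ 2 <= 1.
Definition on_circle {R : realType} (z : R * R) : Prop := z.1 ^+ 2 + z.2 ^+ 2 = 1.

Definition geom_braid {R : realType} (n : nat) (p : 'I_n -> R * R)
    (b : 'I_n -> R -> R * R) : Prop :=
  [/\ forall i, {within `[(0:R), 1], continuous (b i)},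
      forall i t, 0 <= t <= 1 -> in_open_disc (b i t),
      forall i j t, 0 <= t <= 1 -> i != j -> b i t <> b j t,
      forall i, b i 0 = p i
    & forall i, exists j, b i 1 = p j].

(* A homeomorphism of D^2 permuting the punctures which is an involution:
   a representative of an involutive element of MCG(D^2 \ {p_1..p_n}). *)
Definition disc_involution {R : realType} (n : nat) (p : 'I_n -> R * R)
    (tau : R * R -> R * R) : Prop :=
  [/\ {within [set z | in_closed_disc z], continuous tau},
      forall z, in_closed_disc z -> in_closed_disc (tau z),
      forall z, on_circle z -> on_circle (tau z),
      forall z, in_closed_disc z -> tau (tau z) = z
    & forall i, exists j, tau (p i) = p j].

(* Twice the signed area of the triangle (a, b, c); its sign is the
   orientation of the triple. *)
Definition cross {R : realType} (a b c : R * R) : R :=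
  (b.1 - a.1) * (c.2 - a.2) - (b.2 - a.2) * (c.1 - a.1).

(* tau reverses orientation: it reverses the cyclic order of any three
   distinct points of the boundary circle. *)
Definition orientation_reversing {R : realType} (tau : R * R -> R * R) : Prop :=
  forall a b c, on_circle a -> on_circle b -> on_circle c ->
    a <> b -> b <> c -> a <> c ->
    cross (tau a) (tau b) (tau c) * cross a b c < 0.

(* Standard embedding of the solid torus D^2 x S^1 (S^1 = [0,1]/{0~1})
   into R^3. *)
Definition torus_emb {R : realType} (z : R * R) (u : R) : R * R * R :=
  ((2 + z.1) * cos (2 * pi * u), (2 + z.1) * sin (2 * pi * u), z.2).

(* The closure (in R^3) of the braid b b^*, where b^* = tau b tau has strands
   t |-> tau (b j t): first run through b (u in [0,1/2]), then b^*
   (u in [1/2,1]). *)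
Definition closure_b_bstar {R : realType} (n : nat) (b : 'I_n -> R -> R * R)
    (tau : R * R -> R * R) : set (R * R * R) :=
  [set q | exists i u, 0 <= u <= 1 / 2 /\ q = torus_emb (b i (2 * u)) u] `|`
  [set q | exists j u, 1 / 2 <= u <= 1 /\ q = torus_emb (tau (b j (2 * u - 1))) u].

(* The closure is a knot: a single component, i.e. a nonempty connected set. *)
Definition is_knot {R : realType} (K : set (R * R * R)) : Prop :=
  K !=set0 /\ connected K.

Definition braid_perm {R : realType} (n : nat) (p : 'I_n -> R * R)
    (b : 'I_n -> R -> R * R) (s : {perm 'I_n}) : Prop :=
  forall i, b i 1 = p (s i).
Definition tau_perm {R : realType} (n : nat) (p : 'I_n -> R * R)
    (tau : R * R -> R * R) (t : {perm 'I_n}) : Prop :=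
  forall i, tau (p i) = p (t i).

Definition is_ncycle (n : nat) (s : {perm 'I_n}) : Prop :=
  exists i, #|porbit s i| = n.

From HB Require Import structures.
From mathcomp Require Import all_boot all_order all_algebra all_fingroup.
From mathcomp Require Import all_classical all_reals all_analysis.
From mathcomp Require Import ring lra zify.
Unset Printing Implicit Defensive.
Import Order.TTheory GRing.Theory Num.Theory.
Import numFieldNormedType.Exports.

(* The closure of b b^* consists of the arcs of the strands of b, at levels
   [0, 1/2] of the solid torus, and of the arcs of the strands of tau b, at
   levels [1/2, 1].  The b-strand starting at p_i ends at level 1/2 where the
   tau b-strand starting at p_(h i) begins, with h = pi(b tau) = s t; the
   latter returns at level 1 = 0 to p_(h (h i)).  Grouping each b-arc with the
   tau b-arc that follows it gives n compact connected pieces; piece i meets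
   piece h^2 i and meets no piece outside the h^2-orbit of i.  Hence the
   closure is connected iff h^2 is transitive, i.e. iff h is an n-cycle and n
   is odd (for even n the square of an n-cycle has two orbits). *)

Section PermOrbits.
Context {T : finType}.
Implicit Types (u : {perm T}) (x : T).
Local Open Scope group_scope.

Lemma perm_of_injective {U : Type} (p f : T -> U) :
  injective f -> (forall i, exists j, f i = p j) ->
  exists s : {perm T}, forall i, f i = p (s i).
Proof.
move=> f_inj /choice[g fg].
have g_inj : injective g by move=> i i' e; apply: f_inj; rewrite !fg e.
by exists (perm g_inj) => i; rewrite permE.
Qed.

Lemma expg_card_porbit u x k : (u ^+ (#|porbit u x| * k)%N) x = x.
Proof.
elim: k => [|k IHk]; first by rewrite muln0 expg0 perm1.
by rewrite mulnS expgD permM [(u ^+ #|porbit u x|) x]permX iter_porbit.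
Qed.

Lemma card_porbit_le u x d : (0 < d)%N -> (u ^+ d) x = x -> (#|porbit u x| <= d)%N.
Proof.
move=> d_gt0 ux.
have periodic k : (u ^+ (d * k)%N) x = x.
  by elim: k => [|k IHk]; rewrite ?muln0 ?expg0 ?perm1 // mulnS expgD permM ux IHk.
have -> : porbit u x = [set (u ^+ k) x | k : 'I_d].
  apply/setP => y; apply/porbitP/imsetP => [[k ->]|[k _ ->]]; last by exists k.
  exists (Ordinal (ltn_pmod k d_gt0)) => //=.
  by rewrite {1}(divn_eq k d) expgD permM mulnC periodic.
by rewrite (leq_trans (leq_imset_card _ _)) // card_ord.
Qed.

Lemma porbit_expg2_setT u x :
  porbit (u ^+ 2) x = [set: T] <-> odd #|T| /\ porbit u x = [set: T].
Proof.
have sub : porbit (u ^+ 2) x \subset porbit u x.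
  by apply/fintype.subsetP => y /porbitP[k ->]; rewrite -expgM mem_porbit.
have T_gt0 : (0 < #|T|)%N by apply/card_gt0P; exists x.
split=> [u2_full | [oddT u_full]].
  have u_full : porbit u x = [set: T].
    by apply/eqP; rewrite finset.eqEsubset finset.subsetT -u2_full.
  split=> //; apply: contraT => evenT.
  have halfT : #|T| = (#|T|./2).*2 by rewrite -[LHS]odd_double_half (negbTE evenT).
  have : (#|porbit (u ^+ 2) x| <= #|T|./2)%N.
    apply: card_porbit_le; first by rewrite -double_gt0 -halfT.
    by rewrite -expgM mul2n -halfT -{1}(cardsT T) -u_full -[X in u ^+ X]muln1 expg_card_porbit.
  by move: T_gt0; rewrite u2_full cardsT halfT; lia.
apply/eqP; rewrite finset.eqEsubset finset.subsetT /=; apply/fintype.subsetP => y _.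
have /porbitP[k ->] : y \in porbit u x by rewrite u_full inE.
have cardu : #|porbit u x| = (#|T|./2).*2.+1.
  by rewrite u_full cardsT -[LHS]odd_double_half oddT.
rewrite -{1}(expg_card_porbit u x k) -permM -expgD cardu.
have -> : ((#|T|./2).*2.+1 * k + k = 2 * ((#|T|./2).+1 * k))%N by lia.
by rewrite expgM mem_porbit.
Qed.

End PermOrbits.

Lemma is_ncycleP {n} (u : {perm 'I_n}) i : is_ncycle u <-> porbit u i = [set: 'I_n].
Proof.
split=> [[j card_j] | u_full]; last by exists i; rewrite u_full cardsT card_ord.
have j_full : porbit u j = [set: 'I_n].
  by apply/eqP; rewrite finset.eqEcard finset.subsetT cardsT card_ord card_j /=.
by rewrite -j_full; apply/eqP; rewrite eq_porbit_mem j_full inE.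
Qed.

Local Open Scope ring_scope.
Local Open Scope classical_set_scope.

Section ConnectedChain.
Context {T : topologicalType} {I : finType} {g : {perm I}} {Q : I -> set T}.
Hypotheses (Q_closed : forall i, closed (Q i)) (Q_connected : forall i, connected (Q i)).
Hypothesis Q_meet_next : forall i, Q i `&` Q (g i) !=set0.
Hypothesis Q_meet_porbit : forall i j, Q i `&` Q j !=set0 -> j \in porbit g i.

Lemma connected_bigcup_porbitP i0 :
  connected (\bigcup_i Q i) <-> porbit g i0 = [set: I]%SET.
Proof.
set C := \bigcup_i Q i.
have QC i : Q i `<=` C by move=> q Qq; exists i.
split=> [C_conn | g_full].
  pose O := porbit g i0.
  have O_closed i j q : i \in O -> Q i q -> Q j q -> j \in O.
    move=> iO Qiq Qjq; have /eqP <- : porbit g i == O by rewrite eq_porbit_mem.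
    by apply: Q_meet_porbit; exists q.
  pose A := \bigcup_(i in [set i | i \in O]) Q i.
  pose B := \bigcup_(i in [set i | i \notin O]) Q i.
  have closedA : closed A by apply: closed_bigcup => //; exact: finite_finset.
  have closedB : closed B by apply: closed_bigcup => //; exact: finite_finset.
  have AB0 : A `&` B = set0.
    apply/seteqP; split=> // q [[i iO Qiq] [j jO Qjq]].
    by move: jO; rewrite /= (O_closed i j q).
  have sepAB : separated A B by rewrite /separated -(closure_id A).1 // -(closure_id B).1.
  have CAB : C `<=` A `|` B.
    by move=> q [i _ Qiq]; case: (boolP (i \in O)) => iO; [left|right]; exists i.
  case: (connected_subset sepAB CAB C_conn) => [CA | CB].
    apply/eqP; rewrite finset.eqEsubset finset.subsetT /=.
    apply/fintype.subsetP => j _; have [q [Qjq _]] := Q_meet_next j.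
    by have [i iO Qiq] := CA q (QC j q Qjq); exact: O_closed Qiq Qjq.
  have [q [Qq _]] := Q_meet_next i0; have [i iO Qiq] := CB q (QC i0 q Qq).
  by move: iO; rewrite /= (O_closed i0 i q (porbit_id g i0) Qq Qiq).
have [q0 [Qq0 _]] := Q_meet_next i0.
have comp k : Q ((g ^+ k)%g i0) `<=` connected_component C q0.
  elim: k => [|k IHk]; first by rewrite expg0 perm1; exact: connected_component_max.
  have [r [Qr Qgr]] := Q_meet_next ((g ^+ k)%g i0).
  rewrite expgSr permM => q Qq; apply: connected_component_trans (IHk r Qr) _.
  by apply: (connected_component_max Qgr (QC _)) => //; exact: Q_connected.
have -> : C = connected_component C q0.
  apply/seteqP; split=> [q [j _ Qjq]|]; last exact: connected_component_sub.
  have /porbitP[k jk] : j \in porbit g i0 by rewrite g_full inE.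
  by apply: (comp k); rewrite -jk.
exact: component_connected.
Qed.

End ConnectedChain.

Lemma within_continuous_comp_within {X Y Z : topologicalType} {A : set X} {B : set Y}
    {f : X -> Y} {g : Y -> Z} :
  f @` A `<=` B -> {within A, continuous f} -> {within B, continuous g} ->
  {within A, continuous (g \o f)}.
Proof.
move=> fAB /subspace_continuousP cf /subspace_continuousP cg.
have fB x : A x -> B (f x) by move=> Ax; apply: fAB; exists x.
apply/subspace_continuousP => x Ax W gW.
move: (cf x Ax _ (cg (f x) (fB x Ax) W gW)).
rewrite /within /= !nbhs_simpl => fW; apply: (@filterS _ (nbhs x) _ _ _ _ fW) => y fy Ay.
exact: fy Ay (fB y Ay).
Qed.

Lemma segment_image_compact {R : realType} {T : topologicalType} {f : R -> T} {a b : R} :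
  {within `[a, b], continuous f} -> compact (f @` `[a, b]).
Proof. by move/continuous_compact; apply; exact: segment_compact. Qed.

Lemma segment_image_connected {R : realType} {T : topologicalType} {f : R -> T} {a b : R} :
  {within `[a, b], continuous f} -> connected (f @` `[a, b]).
Proof.
apply: connected_continuous_connected.
by apply/connected_intervalP; exact: interval_is_interval.
Qed.

Section TorusEmbedding.
Context {R : realType}.
Implicit Types (z : R * R) (u v : R).

Lemma torus_emb_cvg {T : Type} (F : set_system T) {FF : Filter F}
    (zf : T -> R * R) (uf : T -> R) z u :
  zf x @[x --> F] --> z -> uf x @[x --> F] --> u ->
  torus_emb (zf x) (uf x) @[x --> F] --> torus_emb z u.
Proof.
move=> zc uc.
have z1 : (zf x).1 @[x --> F] --> z.1 by apply: cvg_comp zc _; exact: cvg_fst.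
have z2 : (zf x).2 @[x --> F] --> z.2 by apply: cvg_comp zc _; exact: cvg_snd.
have angle : 2 * pi * uf x @[x --> F] --> 2 * pi * u by exact: cvgM (cvg_cst _) uc.
have radius : 2 + (zf x).1 @[x --> F] --> 2 + z.1 by exact: cvgD (cvg_cst _) z1.
apply: (@cvg_pair _ _ _ F (nbhs _) (nbhs _) FF _ _ _ _ _ z2).
apply: (@cvg_pair _ _ _ F (nbhs _) (nbhs _) FF); apply: cvgM radius _.
  exact: cvg_comp angle (@continuous_cos R _).
exact: cvg_comp angle (@continuous_sin R _).
Qed.

Lemma torus_emb_within_continuous {A : set R} {zf : R -> R * R} {uf : R -> R} :
  {within A, continuous zf} -> continuous uf ->
  {within A, continuous (fun x => torus_emb (zf x) (uf x))}.
Proof.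
move=> /subspace_continuousP zc uc; apply/subspace_continuousP => x Ax.
by apply: torus_emb_cvg; [exact: zc|exact: cvg_within_filter (uc x)].
Qed.

Lemma torus_emb1 z : torus_emb z 1 = torus_emb z 0.
Proof.
have two_pi : 2 * pi = pi *+ 2 :> R by rewrite mulr_natl.
by rewrite /torus_emb !mulr1 !mulr0 cos0 sin0 two_pi cos2pi sin2pi.
Qed.

Lemma cos_2pi_eq1 {d : R} : 0 <= d <= 1 -> cos (2 * pi * d) = 1 -> d = 0 \/ d = 1.
Proof.
move=> /andP[d_ge0 d_le1] cos1; have pi_gt0 := @pi_gt0 R.
have cos_eq1_0 (y : R) : 0 <= y <= pi -> cos y = 1 -> y = 0.
  move=> y_0pi cosy; apply: cos_inj; rewrite ?cos0 // in_itv /= ?lexx ?ltW //.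
have [d_small|d_big] := lerP (2 * pi * d) pi.
  have : 2 * pi * d = 0 by apply: cos_eq1_0 cos1; apply/andP; split; nra.
  by left; nra.
have : 2 * pi * (1 - d) = 0.
  apply: cos_eq1_0; first by apply/andP; split; nra.
  have two_pi : 2 * pi = pi *+ 2 :> R by rewrite mulr_natl.
  by rewrite mulrBr mulr1 two_pi addrC cosD2pi cosN -two_pi.
by right; nra.
Qed.

Lemma cos_sin_2pi_inj {u v} : 0 <= u <= 1 -> 0 <= v <= 1 ->
  cos (2 * pi * u) = cos (2 * pi * v) -> sin (2 * pi * u) = sin (2 * pi * v) ->
  u = v \/ (u = 0 /\ v = 1) \/ (u = 1 /\ v = 0).
Proof.
move=> /andP[u_ge0 u_le1] /andP[v_ge0 v_le1] cos_uv sin_uv.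
have cos1 : cos (2 * pi * `|u - v|) = 1.
  rewrite -[2 * pi]ger0_norm ?mulr_ge0 ?pi_ge0 // -normrM cos_norm.
  by rewrite mulrBr cosB cos_uv sin_uv -!expr2 cos2Dsin2.
have dist_01 : 0 <= `|u - v| <= 1 by rewrite normr_ge0 ler_norml; apply/andP; split; lra.
case: (cos_2pi_eq1 dist_01 cos1) => /eqP.
  by rewrite normr_eq0 subr_eq0 => /eqP; left.
by rewrite eqr_norml => /andP[/orP[] /eqP uv _]; right; [right|left]; split; lra.
Qed.

Lemma torus_emb_inj {z z' u v} :
  in_closed_disc z -> in_closed_disc z' -> 0 <= u <= 1 -> 0 <= v <= 1 ->
  torus_emb z u = torus_emb z' v ->
  z = z' /\ (u = v \/ (u = 0 /\ v = 1) \/ (u = 1 /\ v = 0)).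
Proof.
case: z z' => [a c] [a' c']; rewrite /in_closed_disc /= => z_disc z'_disc u01 v01.
rewrite /torus_emb => -[e1 e2 ->].
have polar r (w : R) : (r * cos w) ^+ 2 + (r * sin w) ^+ 2 = r ^+ 2.
  by rewrite !exprMn -mulrDr cos2Dsin2 mulr1.
have radius_sqr : (2 + a) ^+ 2 = (2 + a') ^+ 2 by rewrite -(polar _ (2 * pi * u)) e1 e2 polar.
have a_eq : a = a' by move/eqP: radius_sqr; rewrite eqf_sqr => /orP[] /eqP; nra.
subst a'; have radius_neq0 : 2 + a != 0 by apply: lt0r_neq0; nra.
split=> //; apply: cos_sin_2pi_inj => //; exact: (mulfI radius_neq0).
Qed.

End TorusEmbedding.

Section BraidClosure.
Context {R : realType} {n : nat} {p : 'I_n -> R * R} {b : 'I_n -> R -> R * R}.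
Context {tau : R * R -> R * R} {s t : {perm 'I_n}}.
Hypothesis p_inj : injective p.
Hypotheses (b_cont : forall i, {within `[(0:R), 1], continuous (b i)})
  (b_disc : forall i x, 0 <= x <= 1 -> in_open_disc (b i x))
  (b_disj : forall i j x, 0 <= x <= 1 -> i != j -> b i x <> b j x)
  (b0 : forall i, b i 0 = p i).
Hypotheses (tau_cont : {within [set z | in_closed_disc z], continuous tau})
  (tau_disc : forall z, in_closed_disc z -> in_closed_disc (tau z))
  (tauK : forall z, in_closed_disc z -> tau (tau z) = z).
Hypotheses (b_perm : braid_perm p b s) (tau_permt : tau_perm p tau t).

Local Notation h := (s * t)%g.

Definition strand_path i (x : R) := torus_emb (b i x) (x / 2).
Definition mirror_path j (x : R) := torus_emb (tau (b j x)) ((x + 1) / 2).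
Definition strand_arc i := strand_path i @` `[(0:R), 1].
Definition mirror_arc j := mirror_path j @` `[(0:R), 1].
Definition closure_piece i := strand_arc i `|` mirror_arc (h i).

Lemma in01P (x : R) : `[(0:R), 1] x <-> 0 <= x <= 1.
Proof. by rewrite /= in_itv. Qed.

Lemma in01_0 : `[(0:R), 1] 0. Proof. by apply/in01P; rewrite lexx ler01. Qed.
Lemma in01_1 : `[(0:R), 1] 1. Proof. by apply/in01P; rewrite lexx ler01. Qed.

Lemma b_closed_disc i {x} : 0 <= x <= 1 -> in_closed_disc (b i x).
Proof. by move/(b_disc i)/ltW. Qed.

Lemma tau_b_closed_disc j {x} : 0 <= x <= 1 -> in_closed_disc (tau (b j x)).
Proof. by move/(b_closed_disc j)/tau_disc. Qed.

Lemma t_involutive : involutive t.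
Proof.
by move=> i; apply: p_inj; rewrite -!tau_permt tauK // -b0; apply/b_closed_disc/in01P/in01_0.
Qed.

Lemma strand_path1 i : strand_path i 1 = mirror_path (h i) 0.
Proof. by rewrite /strand_path /mirror_path b_perm b0 tau_permt permM t_involutive add0r. Qed.

Lemma mirror_path1 j : mirror_path j 1 = strand_path (h j) 0.
Proof.
rewrite /strand_path /mirror_path b_perm tau_permt b0 permM mul0r.
by rewrite divff ?pnatr_eq0 // torus_emb1.
Qed.

Lemma strand_path_inj {i i' x y} : 0 <= x <= 1 -> 0 <= y <= 1 ->
  strand_path i x = strand_path i' y -> i = i'.
Proof.
move=> x01 y01 e; have /andP[x0 x1] := x01; have /andP[y0 y1] := y01.
have [||bxy levels] := torus_emb_inj (b_closed_disc i x01) (b_closed_disc i' y01) _ _ e.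
- by apply/andP; split; lra.
- by apply/andP; split; lra.
have xy : x = y by case: levels => [? | [[? ?] | [? ?]]]; lra.
by subst y; apply/eqP; apply: contraT => /(b_disj _ _ _ x01).
Qed.

Lemma mirror_path_inj {j j' x y} : 0 <= x <= 1 -> 0 <= y <= 1 ->
  mirror_path j x = mirror_path j' y -> j = j'.
Proof.
move=> x01 y01 e; have /andP[x0 x1] := x01; have /andP[y0 y1] := y01.
have [||tbxy levels] :=
  torus_emb_inj (tau_b_closed_disc j x01) (tau_b_closed_disc j' y01) _ _ e.
- by apply/andP; split; lra.
- by apply/andP; split; lra.
have xy : x = y by case: levels => [? | [[? ?] | [? ?]]]; lra.
subst y; apply/eqP; apply: contraT => /(b_disj _ _ _ x01) [].
by rewrite -[LHS]tauK ?tbxy ?tauK //; exact: b_closed_disc.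
Qed.

Lemma strand_mirror_meet {i j x y} : 0 <= x <= 1 -> 0 <= y <= 1 ->
  strand_path i x = mirror_path j y -> j = h i \/ i = h j.
Proof.
move=> x01 y01 e; have /andP[x0 x1] := x01; have /andP[y0 y1] := y01.
have [||bxy levels] :=
  torus_emb_inj (b_closed_disc i x01) (tau_b_closed_disc j y01) _ _ e.
- by apply/andP; split; lra.
- by apply/andP; split; lra.
case: levels => [xl|[[xl yl]|[xl yl]]].
- move: bxy; have [-> ->] : x = 1 /\ y = 0 by split; lra.
  rewrite b_perm b0 tau_permt => /p_inj s_t.
  by left; rewrite permM s_t t_involutive.
- move: bxy; have [-> ->] : x = 0 /\ y = 1 by split; lra.
  rewrite b_perm b0 tau_permt => /p_inj ->.
  by right; rewrite permM.
- exfalso; lra.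
Qed.

Lemma closure_b_bstarE : closure_b_bstar b tau = \bigcup_i closure_piece i.
Proof.
rewrite /closure_b_bstar; apply/seteqP; split=> q.
  case=> [[i [u [/andP[u0 u1] ->]]] | [j [u [/andP[u0 u1] ->]]]].
    exists i => //; left; exists (2 * u); first by apply/in01P/andP; split; lra.
    by rewrite /strand_path; congr torus_emb; field.
  exists ((h^-1)%g j) => //; right; rewrite permKV.
  exists (2 * u - 1); first by apply/in01P/andP; split; lra.
  by rewrite /mirror_path; congr torus_emb; field.
case=> i _ [[x /in01P/andP[x0 x1] <-] | [x /in01P/andP[x0 x1] <-]].
  left; exists i, (x / 2); split; first by apply/andP; split; lra.
  by rewrite /strand_path; congr (torus_emb (b i _) _); field.
right; exists (h i), ((x + 1) / 2); split; first by apply/andP; split; lra.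
by rewrite /mirror_path; congr (torus_emb (tau (b _ _)) _); field.
Qed.

Lemma strand_path_continuous i : {within `[(0:R), 1], continuous (strand_path i)}.
Proof.
apply: torus_emb_within_continuous (b_cont i) _ => x.
by apply: cvgM; [exact: cvg_id | exact: cvg_cst].
Qed.

Lemma mirror_path_continuous j : {within `[(0:R), 1], continuous (mirror_path j)}.
Proof.
apply: torus_emb_within_continuous => [|x]; last first.
  by apply: cvgM; [apply: cvgD; [exact: cvg_id | exact: cvg_cst] | exact: cvg_cst].
apply: within_continuous_comp_within tau_cont; last exact: b_cont.
by move=> _ [x /in01P x01 <-]; exact: b_closed_disc.
Qed.

Lemma closure_piece_closed i : closed (closure_piece i).
Proof.
apply: closedU; (apply: compact_closed; first exact: norm_hausdorff).
  exact/segment_image_compact/strand_path_continuous.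
exact/segment_image_compact/mirror_path_continuous.
Qed.

Lemma closure_piece_connected i : connected (closure_piece i).
Proof.
apply: connectedU.
- exists (strand_path i 1); split; first by exists 1 => //; exact: in01_1.
  by rewrite strand_path1; exists 0 => //; exact: in01_0.
- exact/segment_image_connected/strand_path_continuous.
- exact/segment_image_connected/mirror_path_continuous.
Qed.

Lemma closure_piece_meet_next i : closure_piece i `&` closure_piece ((h ^+ 2)%g i) !=set0.
Proof.
exists (mirror_path (h i) 1); split; first by right; exists 1 => //; exact: in01_1.
by left; rewrite mirror_path1 permX; exists 0 => //; exact: in01_0.
Qed.

Lemma closure_piece_meet_porbit i j :
  closure_piece i `&` closure_piece j !=set0 -> j \in porbit (h ^+ 2)%g i.
Proof.
move=> [q [Piq Pjq]].
suff : [\/ j = i, j = (h ^+ 2)%g i | i = (h ^+ 2)%g j].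
  case=> ->; [exact: porbit_id | exact: (mem_porbit _ 1) | ].
  by rewrite porbit_sym; exact: (mem_porbit _ 1).
rewrite !permX /=.
case: Piq Pjq => [[x /in01P x01 <-] | [x /in01P x01 <-]] [[y /in01P y01 e] | [y /in01P y01 e]].
- by constructor 1; exact: strand_path_inj y01 x01 e.
- by case: (strand_mirror_meet x01 y01 (esym e)) => [/perm_inj|] ->; constructor.
- by case: (strand_mirror_meet y01 x01 e) => [/perm_inj|] ->; constructor.
- by constructor 1; apply: perm_inj; exact: mirror_path_inj y01 x01 e.
Qed.

Lemma is_knot_closureE (i0 : 'I_n) : is_knot (closure_b_bstar b tau) <-> odd n /\ is_ncycle h.
Proof.
rewrite /is_knot closure_b_bstarE (is_ncycleP h i0) -[n in odd n]card_ord -porbit_expg2_setT.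
rewrite -(connected_bigcup_porbitP closure_piece_closed closure_piece_connected
  closure_piece_meet_next closure_piece_meet_porbit).
split=> [[] // | conn]; split=> //.
by exists (strand_path i0 0), i0 => //; left; exists 0 => //; exact: in01_0.
Qed.

End BraidClosure.

Theorem lemma3p3 (R : realType) (n : nat) (p : 'I_n -> R * R)
    (b : 'I_n -> R -> R * R) (tau : R * R -> R * R) :
  (0 < n)%N ->
  injective p ->
  (forall i, in_open_disc (p i)) ->
  geom_braid p b ->
  disc_involution p tau ->
  orientation_reversing tau ->
  is_knot (closure_b_bstar b tau) <->
  (odd n /\ exists (s t : {perm 'I_n}),
     [/\ braid_perm p b s, tau_perm p tau t & is_ncycle (s * t)%g]).
Proof.
(* The number of components only depends on the permutations of the
   punctures. *)
move=> n_gt0 p_inj p_disc [b_cont b_disc b_disj b0 b_end].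
move=> [tau_cont tau_disc _ tauK tau_end] _.
have [s b_perm] : exists s : {perm 'I_n}, braid_perm p b s.
  apply: (perm_of_injective p (fun i => b i 1)) b_end => i j bij.
  have one01 : 0 <= (1 : R) <= 1 by rewrite ler01 lexx.
  by apply/eqP/contraT => /(b_disj _ _ _ one01)/(_ bij).
have [t tau_permt] : exists t : {perm 'I_n}, tau_perm p tau t.
  apply: (perm_of_injective p (fun i => tau (p i))) tau_end => i j tauij.
  by apply: p_inj; rewrite -[p i]tauK ?tauij ?tauK //; exact/ltW/p_disc.
have knotE := is_knot_closureE p_inj b_cont b_disc b_disj b0 tau_cont tau_disc tauK.
split=> [/(knotE _ _ b_perm tau_permt (Ordinal n_gt0)) [odd_n ncycle] |].
  by split=> //; exists s, t.
by case=> odd_n [s' [t' [bs ts ncycle]]]; apply/(knotE _ _ bs ts (Ordinal n_gt0)).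
Qed.
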